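(* Let $\psi\in\mathbf{\Psi}_n$, and $\nu:=(\nu_1,\ldots,\nu_n)\in\mathbb{R}^n$ with $|\!|\!|\nu|\!|\!|_\psi=1$. Then $$\partial|\!|\!|\cdot|\!|\!|_{\psi}(\nu)=\big\{(\tau_1\gamma_1,\ldots,\tau_n\gamma_n)\in\mathbb{R}^n \mid \mu\in\partial\psi(t),\ \gamma_i:=\psi(t)+\langle \mu,\mathbf{e}_i-t\rangle\ge 0,\ \tau_i:={\rm sgn}(\nu_i)\ \text{if}\ \nu_i\ne 0\ \text{and}\ \tau_i\in\{-1,1\}\ \text{if}\ \nu_i=0\ (i=1,\ldots,n)\big\},$$ where $t:=\Big(\frac{|\nu_1|}{\sum_{i=1}^{n}|\nu_i|},\ldots,\frac{|\nu_n|}{\sum_{i=1}^{n}|\nu_i|}\Big)$.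
   Context: $\Omega_n:=\{t\in\mathbb{R}^n\mid t_i\ge0,\ \sum_i t_i=1\}$, $\Omega_n^\circ:=\{t\in\Omega_n\mid t_i<1\ \forall i\}$, $\mathbf{e}_i$ the standard unit vectors. $\mathbf{\Psi}_n$ is the class of convex continuous $\psi:\Omega_n\to\mathbb{R}$ with (B1) $\psi(\mathbf{e}_i)=1$ for all $i$ and (B2) $\psi(t)\ge(1-t_i)\psi\big(\frac{t_1}{1-t_i},\ldots,\frac{t_{i-1}}{1-t_i},0,\frac{t_{i+1}}{1-t_i},\ldots,\frac{t_n}{1-t_i}\big)$ for all $t\in\Omega_n^\circ$, $i=1,\ldots,n$. Here $|\!|\!|\cdot|\!|\!|_\psi$ is the norm on $\mathbb{R}^n$ given by $|\!|\!|\nu|\!|\!|_\psi:=\big(\sum_i|\nu_i|\big)\psi\big(\frac{|\nu_1|}{\sum_i|\nu_i|},\ldots,\frac{|\nu_n|}{\sum_i|\nu_i|}\big)$ for $\nu\ne0$ and $0$ at $0$. $\partial$ denotes the convex subdifferential (for $\psi$, the subdifferential of the convex function on $\Omega_n$); ${\rm sgn}$ is the sign function. *)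

From HB Require Import structures.
From mathcomp Require Import all_boot all_order all_algebra.
From mathcomp Require Import all_classical all_reals all_analysis.
Set Implicit Arguments. Unset Strict Implicit. Unset Printing Implicit Defensive.
Import Order.TTheory GRing.Theory Num.Theory.
Import numFieldNormedType.Exports.
Local Open Scope classical_set_scope.
Local Open Scope ring_scope.

Section Defs.
Variables (R : realType) (n : nat).

Definition simplex : set 'rV[R]_n :=
  [set t | (forall i, 0 <= t ord0 i) /\ \sum_i t ord0 i = 1].

Definition simplex_int : set 'rV[R]_n :=
  [set t | simplex t /\ (forall i, t ord0 i < 1)].

Definition unitv (i : 'I_n) : 'rV[R]_n := \row_j (i == j)%:R.

Definition dotv (u v : 'rV[R]_n) : R := \sum_i u ord0 i * v ord0 i.

Definition convex_on (D : set 'rV[R]_n) (f : 'rV[R]_n -> R) : Prop :=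
  forall s t (l : R), D s -> D t -> 0 <= l -> l <= 1 ->
    f (l *: s + (1 - l) *: t) <= l * f s + (1 - l) * f t.

Definition dropi (t : 'rV[R]_n) (i : 'I_n) : 'rV[R]_n :=
  \row_j (if j == i then 0 else t ord0 j / (1 - t ord0 i)).

(* the class Psi_n; psi only matters on Omega_n *)
Definition Psi (psi : 'rV[R]_n -> R) : Prop :=
  convex_on simplex psi /\
  {within simplex, continuous psi} /\
  (forall i, psi (unitv i) = 1) /\
  (forall t i, simplex_int t ->
     (1 - t ord0 i) * psi (dropi t i) <= psi t).

Definition l1 (v : 'rV[R]_n) : R := \sum_i `|v ord0 i|.

Definition absnormalize (v : 'rV[R]_n) : 'rV[R]_n :=
  \row_j (`|v ord0 j| / l1 v).

Definition psi_norm (psi : 'rV[R]_n -> R) (v : 'rV[R]_n) : R :=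
  if v == 0 then 0 else l1 v * psi (absnormalize v).

Definition subdiff (D : set 'rV[R]_n) (f : 'rV[R]_n -> R) (x : 'rV[R]_n)
  : set 'rV[R]_n :=
  [set xi | forall y, D y -> f x + dotv xi (y - x) <= f y].

End Defs.

From HB Require Import structures.
From mathcomp Require Import all_boot all_order all_algebra.
From mathcomp Require Import all_classical all_reals all_analysis.
From mathcomp Require Import ring lra.
Set Implicit Arguments.
Unset Strict Implicit.
Unset Printing Implicit Defensive.
Import Order.TTheory GRing.Theory Num.Theory.
Local Open Scope classical_set_scope.
Local Open Scope ring_scope.

(* Since |||.|||_psi is positively homogeneous, xi is a subgradient at nu
   exactly when xi is dominated by the norm and attains it at nu.  Writing
   gamma_i = c + mu_i with c := psi t - <mu, t>, one has
   sum_i gamma_i |y_i| = l1 y (c + <mu, y / l1 y>), which the subgradient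
   inequality for mu bounds by |||y|||_psi; signs tau_i then produce the dual
   vectors.  Conversely, for a dual vector xi, coordinatewise reflections of nu
   force xi_i nu_i >= 0, and mu := |xi| is a subgradient of psi at t with
   gamma_i = |xi_i|. *)

Lemma sg_mul_norm (R : realDomainType) (x y : R) :
  0 <= x * y -> y != 0 -> Num.sg y * `|x| = x.
Proof.
move=> xy_ge0 y_neq0; case: (ltrgtP y 0) => [y_lt0|y_gt0|y_eq0].
- by rewrite ltr0_sg // mulN1r ler0_norm ?opprK //; nra.
- by rewrite gtr0_sg // mul1r ger0_norm //; nra.
- by rewrite y_eq0 eqxx in y_neq0.
Qed.

Section Dotv.
Variables (R : realType) (n : nat).
Implicit Types (x y z : 'rV[R]_n).

Lemma dotvB x y z : dotv x (y - z) = dotv x y - dotv x z.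
Proof. by rewrite /dotv -sumrB; apply: eq_bigr => i _; rewrite !mxE mulrBr. Qed.

Lemma dotvZ x (a : R) y : dotv x (a *: y) = a * dotv x y.
Proof. by rewrite /dotv mulr_sumr; apply: eq_bigr => i _; rewrite !mxE mulrCA. Qed.

Lemma dotv0 x : dotv x 0 = 0.
Proof. by rewrite -(scale0r 0) dotvZ mul0r. Qed.

Lemma dotv_unitv x i : dotv x (unitv R i) = x ord0 i.
Proof.
rewrite /dotv (bigD1 i) //= big1 => [|j j_neq_i]; first by rewrite !mxE eqxx mulr1 addr0.
by rewrite !mxE eq_sym (negbTE j_neq_i) mulr0.
Qed.

End Dotv.

Section SubdiffPosHomogeneous.
Variables (R : realType) (n : nat) (f : 'rV[R]_n -> R).
Hypothesis fZ : forall (a : R) v, 0 < a -> f (a *: v) = a * f v.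

Lemma subdiff_pos_homogeneous x xi :
  subdiff setT f x xi <-> dotv xi x = f x /\ forall y, dotv xi y <= f y.
Proof.
split=> [xi_sub | [xi_x xi_le] y _]; last first.
  by rewrite dotvB xi_x; have := xi_le y; lra.
have f0 : f 0 = 0 by have := @fZ 2 0 (ltr0Sn R 1); rewrite scaler0; lra.
have xi_sub' y : f x + dotv xi y - dotv xi x <= f y.
  by have := xi_sub y I; rewrite dotvB addrA.
have xi_x : dotv xi x = f x.
  by have := xi_sub' 0; have := xi_sub' (2 *: x); rewrite dotv0 f0 dotvZ fZ //; lra.
by split=> // y; have := xi_sub' y; rewrite xi_x; lra.
Qed.

End SubdiffPosHomogeneous.

Section PsiNorm.
Variables (R : realType) (n : nat) (psi : 'rV[R]_n -> R).
Implicit Types (v y s nu xi mu tau : 'rV[R]_n).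

Lemma l1_ge0 v : 0 <= l1 v.
Proof. exact: sumr_ge0. Qed.

Lemma l1_eq0 v : (l1 v == 0) = (v == 0).
Proof.
apply/eqP/eqP => [l1_eq0|->]; last by rewrite /l1 big1 // => i _; rewrite mxE normr0.
by apply/rowP => i; rewrite mxE; apply/normr0_eq0; exact: (psumr_eq0P _ l1_eq0).
Qed.

Lemma l1_gt0 v : v != 0 -> 0 < l1 v.
Proof. by rewrite lt_def l1_ge0 andbT l1_eq0. Qed.

Lemma absnormalize_simplex v : v != 0 -> simplex (absnormalize v).
Proof.
move=> v_neq0; have l1_gt0v := l1_gt0 v_neq0; split=> [i|].
  by rewrite mxE divr_ge0 // ltW.
rewrite -[RHS](divff (lt0r_neq0 l1_gt0v)) /l1 mulr_suml.
by apply: eq_bigr => i _; rewrite mxE.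
Qed.

Lemma psi_normE v : v != 0 -> psi_norm psi v = l1 v * psi (absnormalize v).
Proof. by rewrite /psi_norm => /negbTE ->. Qed.

Lemma psi_norm0 : psi_norm psi 0 = 0.
Proof. by rewrite /psi_norm eqxx. Qed.

Lemma psi_normZ (a : R) v : 0 < a -> psi_norm psi (a *: v) = a * psi_norm psi v.
Proof.
move=> a_gt0; have [->|v_neq0] := eqVneq v 0; first by rewrite scaler0 psi_norm0 mulr0.
have av_neq0 : a *: v != 0 by rewrite scaler_eq0 negb_or gt_eqF.
have l1Z : l1 (a *: v) = a * l1 v.
  by rewrite /l1 mulr_sumr; apply: eq_bigr => i _; rewrite mxE normrM gtr0_norm.
rewrite !psi_normE // l1Z -mulrA; congr (_ * (_ * psi _)); apply/rowP => i.
by rewrite !mxE normrM gtr0_norm // l1Z invfM mulrACA divff ?mul1r ?gt_eqF.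
Qed.

Lemma psi_norm_abs v y : (forall i, `|y ord0 i| = `|v ord0 i|) ->
  psi_norm psi y = psi_norm psi v.
Proof.
move=> y_abs.
have l1_eq : l1 y = l1 v by apply: eq_bigr => i _; rewrite y_abs.
rewrite /psi_norm -l1_eq0 l1_eq l1_eq0; congr (if _ then _ else _ * psi _).
by apply/rowP => i; rewrite !mxE y_abs l1_eq.
Qed.

Lemma psi_norm_simplex s : @simplex R n s -> psi_norm psi s = psi s.
Proof.
move=> [s_ge0 s_sum]; have l1_s : l1 s = 1.
  by rewrite -s_sum; apply: eq_bigr => i _; rewrite ger0_norm.
have s_neq0 : s != 0 by rewrite -l1_eq0 l1_s oner_neq0.
rewrite psi_normE // l1_s mul1r; congr psi.
by apply/rowP => i; rewrite mxE l1_s divr1 ger0_norm.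
Qed.

Lemma sum_weighted_abs (c : R) mu v : v != 0 ->
  \sum_i (c + mu ord0 i) * `|v ord0 i| = l1 v * (c + dotv mu (absnormalize v)).
Proof.
move=> v_neq0; have l1_neq0 := lt0r_neq0 (l1_gt0 v_neq0).
rewrite mulrDr; under eq_bigr do rewrite mulrDl.
rewrite big_split /= -mulr_sumr mulrC; congr (_ + _).
by rewrite /dotv mulr_sumr; apply: eq_bigr => i _; rewrite mxE; field.
Qed.

Definition gamma_coef t mu (i : 'I_n) : R := psi t + dotv mu (unitv R i - t).

Lemma gamma_coefE t mu i : gamma_coef t mu i = psi t - dotv mu t + mu ord0 i.
Proof. by rewrite /gamma_coef dotvB dotv_unitv addrA addrAC. Qed.

Lemma dotv_signed_le gamma tau y :
  (forall i, 0 <= gamma i) -> (forall i, `|tau ord0 i| = 1) ->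
  dotv (\row_i (tau ord0 i * gamma i)) y <= \sum_i gamma i * `|y ord0 i|.
Proof.
move=> gamma_ge0 tau_unit; apply: ler_sum => i _; rewrite mxE.
apply: le_trans (ler_norm _) _.
by rewrite !normrM tau_unit mul1r ger0_norm.
Qed.

Lemma dotv_signed_eq gamma tau v : (forall i, tau ord0 i * v ord0 i = `|v ord0 i|) ->
  dotv (\row_i (tau ord0 i * gamma i)) v = \sum_i gamma i * `|v ord0 i|.
Proof.
by move=> tau_v; apply: eq_bigr => i _; rewrite mxE mulrAC mulrC tau_v.
Qed.

Definition sign_pattern nu tau : Prop :=
  (forall i, nu ord0 i != 0 -> tau ord0 i = Num.sg (nu ord0 i)) /\
  (forall i, nu ord0 i = 0 -> tau ord0 i = 1 \/ tau ord0 i = -1).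

Lemma sign_pattern_norm nu tau : sign_pattern nu tau -> forall i, `|tau ord0 i| = 1.
Proof.
move=> [tau_sg tau_pm] i; have [nu_eq0|nu_neq0] := eqVneq (nu ord0 i) 0.
  by case: (tau_pm i nu_eq0) => ->; rewrite ?normrN normr1.
by rewrite tau_sg // normr_sg nu_neq0.
Qed.

Lemma sign_pattern_mul nu tau : sign_pattern nu tau ->
  forall i, tau ord0 i * nu ord0 i = `|nu ord0 i|.
Proof.
move=> [tau_sg _] i; have [->|nu_neq0] := eqVneq (nu ord0 i) 0.
  by rewrite normr0 mulr0.
by rewrite tau_sg // -normrEsg.
Qed.

Lemma signed_gamma_coef_dual nu mu tau : nu != 0 ->
  let t := absnormalize nu in
  subdiff (@simplex R n) psi t mu ->
  (forall i, 0 <= gamma_coef t mu i) ->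
  sign_pattern nu tau ->
  let xi := \row_i (tau ord0 i * gamma_coef t mu i) in
  dotv xi nu = psi_norm psi nu /\ forall y, dotv xi y <= psi_norm psi y.
Proof.
move=> nu_neq0 t mu_sub gamma_ge0 tau_sign xi.
have sum_gammaE y : y != 0 ->
    \sum_i gamma_coef t mu i * `|y ord0 i|
    = l1 y * (psi t - dotv mu t + dotv mu (absnormalize y)).
  by move=> y_neq0; under eq_bigr do rewrite gamma_coefE; rewrite sum_weighted_abs.
split.
  rewrite dotv_signed_eq; last exact: sign_pattern_mul.
  by rewrite sum_gammaE // psi_normE // addrNK.
move=> y; apply: le_trans (dotv_signed_le y gamma_ge0 (sign_pattern_norm tau_sign)) _.
have [->|y_neq0] := eqVneq y 0.
  by rewrite psi_norm0 big1 // => i _; rewrite mxE normr0 mulr0.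
rewrite sum_gammaE // psi_normE //; apply: ler_wpM2l; first exact: l1_ge0.
by have := mu_sub _ (absnormalize_simplex y_neq0); rewrite dotvB addrA addrAC.
Qed.

Section DualVector.
Variable xi : 'rV[R]_n.
Hypothesis xi_le : forall y, dotv xi y <= psi_norm psi y.

Lemma dual_sign_nonneg v : dotv xi v = psi_norm psi v ->
  forall i, 0 <= xi ord0 i * v ord0 i.
Proof.
move=> xi_v i; have := xi_le (v - (2 * v ord0 i) *: unitv R i).
rewrite dotvB dotvZ dotv_unitv xi_v (@psi_norm_abs v); first lra.
move=> j; rewrite !mxE; have [<-|] := eqVneq i j; last by rewrite mulr0 subr0.
by rewrite mulr1 -normrN; congr `|_|; lra.
Qed.

Lemma dotv_abs_simplex_le s : @simplex R n s -> dotv (\row_i `|xi ord0 i|) s <= psi s.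
Proof.
move=> s_simplex; rewrite -psi_norm_simplex //.
set z := \row_j (if 0 <= xi ord0 j then s ord0 j else - s ord0 j).
have -> : dotv (\row_i `|xi ord0 i|) s = dotv xi z.
  apply: eq_bigr => j _; rewrite !mxE; case: ifP => [xi_ge0|/negbT].
    by rewrite ger0_norm.
  by rewrite -ltNge => xi_lt0; rewrite ltr0_norm // mulrN mulNr.
rewrite -(@psi_norm_abs s z); first exact: xi_le.
by move=> j; rewrite mxE; case: ifP; rewrite ?normrN.
Qed.

Lemma dotv_abs_absnormalize v : v != 0 -> (forall i, 0 <= xi ord0 i * v ord0 i) ->
  l1 v * dotv (\row_i `|xi ord0 i|) (absnormalize v) = dotv xi v.
Proof.
move=> v_neq0 xi_v_ge0; have l1_neq0 := lt0r_neq0 (l1_gt0 v_neq0).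
rewrite /dotv mulr_sumr; apply: eq_bigr => i _.
by rewrite !mxE -[RHS]ger0_norm // normrM; field.
Qed.

End DualVector.

Lemma dual_signed_gamma_coef nu xi : nu != 0 ->
  dotv xi nu = psi_norm psi nu -> (forall y, dotv xi y <= psi_norm psi y) ->
  let t := absnormalize nu in
  exists mu tau : 'rV[R]_n,
     subdiff (@simplex R n) psi t mu /\
     (forall i, 0 <= gamma_coef t mu i) /\
     sign_pattern nu tau /\
     xi = \row_i (tau ord0 i * gamma_coef t mu i).
Proof.
move=> nu_neq0 xi_nu xi_le t; set mu := \row_i `|xi ord0 i|.
have xi_nu_ge0 := dual_sign_nonneg xi_le xi_nu.
have mu_t : dotv mu t = psi t.
  apply: (mulfI (lt0r_neq0 (l1_gt0 nu_neq0))).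
  by rewrite dotv_abs_absnormalize // xi_nu psi_normE.
have gammaE i : gamma_coef t mu i = `|xi ord0 i|.
  by rewrite gamma_coefE mu_t subrr add0r mxE.
exists mu, (\row_i (if nu ord0 i != 0 then Num.sg (nu ord0 i)
                    else if 0 <= xi ord0 i then 1 else -1)).
split=> [s s_simplex|]; first by rewrite dotvB mu_t addrC subrK dotv_abs_simplex_le.
split=> [i|]; first by rewrite gammaE.
split.
  split=> i nu_i; rewrite mxE; first by rewrite nu_i.
  by rewrite nu_i eqxx; case: ifP; [left|right].
apply/rowP => i; rewrite !mxE gammaE.
have [nu_eq0i|nu_neq0i] /= := eqVneq (nu ord0 i) 0; last by rewrite sg_mul_norm.
case: ifP => [xi_ge0|/negbT]; first by rewrite mul1r ger0_norm.
by rewrite -ltNge => xi_lt0; rewrite ltr0_norm // mulN1r opprK.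
Qed.

End PsiNorm.

Theorem lemma4p1 (R : realType) (n : nat) (psi : 'rV[R]_n -> R)
    (nu : 'rV[R]_n) :
  Psi psi -> psi_norm psi nu = 1 ->
  let t := absnormalize nu in
  subdiff setT (psi_norm psi) nu =
  [set xi | exists mu tau : 'rV[R]_n,
     subdiff (@simplex R n) psi t mu /\
     (forall i, 0 <= psi t + dotv mu (@unitv R n i - t)) /\
     (forall i, nu ord0 i != 0 -> tau ord0 i = Num.sg (nu ord0 i)) /\
     (forall i, nu ord0 i = 0 -> tau ord0 i = 1 \/ tau ord0 i = -1) /\
     xi = \row_i (tau ord0 i * (psi t + dotv mu (@unitv R n i - t)))].
Proof.
move=> _ nu_norm t.
have nu_neq0 : nu != 0 by apply: contra_eq_neq nu_norm => ->; rewrite psi_norm0 eq_sym oner_neq0.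
have subdiffE := subdiff_pos_homogeneous (@psi_normZ R n psi).
apply/seteqP; split=> xi /=.
  move=> /subdiffE[xi_nu xi_le].
  have [mu [tau [mu_sub [gamma_ge0 [[tau_sg tau_pm] ->]]]]] :=
    dual_signed_gamma_coef nu_neq0 xi_nu xi_le.
  by exists mu, tau.
move=> [mu [tau [mu_sub [gamma_ge0 [tau_sg [tau_pm ->]]]]]]; apply/subdiffE.
exact: signed_gamma_coef_dual nu_neq0 mu_sub gamma_ge0 (conj tau_sg tau_pm).
Qed.
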